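(* Let $X$ be a compact metric space with metric $d$, let $f:X\to X$ be continuous, let $Q=\{m_i\}_{i=1}^\infty$ be a strictly increasing sequence of positive integers, and let $\delta>0$. Then the set of all distributional $\delta$-scrambled pairs in the sequence $Q$ is a $G_\delta$ subset of $X\times X$.
   Context: For $x,y\in X$, $t>0$, $n\ge1$, put $\Phi^n_{(xy,Q)}(t)=\frac1n\#\{1\le i\le n: d(f^{m_i}(x),f^{m_i}(y))\le t\}$, $\Phi_{(xy,Q)}(t)=\liminf_{n\to\infty}\Phi^n_{(xy,Q)}(t)$ and $\Phi^\star_{(xy,Q)}(t)=\limsup_{n\to\infty}\Phi^n_{(xy,Q)}(t)$. A pair $(x,y)\in X\times X$ is a distributional $\delta$-scrambled pair in the sequence $Q$ if (1) $\Phi^\star_{(xy,Q)}(t)=1$ for every $t>0$, and (2) $\Phi_{(xy,Q)}(\delta)=0$. *)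

From HB Require Import structures.
From mathcomp Require Import all_boot all_order all_algebra.
From mathcomp Require Import all_classical all_reals all_analysis.
From mathcomp Require Import borel_hierarchy.
Set Implicit Arguments. Unset Strict Implicit. Unset Printing Implicit Defensive.
Import Order.TTheory GRing.Theory Num.Theory.
Import numFieldNormedType.Exports.
Local Open Scope classical_set_scope.
Local Open Scope ring_scope.

(* The sequence Q = {m_i}_{i>=1} is represented by m : nat -> nat with
   m_i = m (i-1), i.e. the paper's index i in 1..n corresponds to i-1 in 0..n-1. *)

Definition close_at {R : realType} {X : metricType R} (f : X -> X) (m : nat -> nat)
    (x y : X) (t : R) (i : nat) : bool :=
  mdist (iter (m i) f x) (iter (m i) f y) <= t.

Definition Phi_n {R : realType} {X : metricType R} (f : X -> X) (m : nat -> nat)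
    (x y : X) (t : R) (n : nat) : R :=
  (\sum_(i < n) nat_of_bool (close_at f m x y t i))%N%:R / n%:R.

Definition Phi_lower {R : realType} {X : metricType R} (f : X -> X) (m : nat -> nat)
    (x y : X) (t : R) : \bar R :=
  limn_einf (fun n => (Phi_n f m x y t n)%:E).

Definition Phi_upper {R : realType} {X : metricType R} (f : X -> X) (m : nat -> nat)
    (x y : X) (t : R) : \bar R :=
  limn_esup (fun n => (Phi_n f m x y t n)%:E).

Definition distr_scrambled_pair {R : realType} {X : metricType R} (f : X -> X)
    (m : nat -> nat) (delta : R) (x y : X) : Prop :=
  (forall t : R, 0 < t -> Phi_upper f m x y t = 1%:E) /\
  Phi_lower f m x y delta = 0%:E.

Definition distr_scrambled_pairs {R : realType} {X : metricType R} (f : X -> X)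
    (m : nat -> nat) (delta : R) : set (X * X) :=
  [set p | distr_scrambled_pair f m delta p.1 p.2].

From HB Require Import structures.
From mathcomp Require Import all_boot all_order all_algebra.
From mathcomp Require Import all_classical all_reals all_analysis.
From mathcomp Require Import borel_hierarchy lra.
Import Order.TTheory GRing.Theory Num.Theory.
Import numFieldNormedType.Exports.
Local Open Scope classical_set_scope.
Local Open Scope ring_scope.

(* Both defining conditions can be rewritten with countably many quantifiers
   over finitely many iterates.  [limsup Phi(t) = 1] for all [t > 0] holds iff
   for every [j] there are arbitrarily large [n] such that more than
   [(1 - 1/(j+1)) n] of the first [n] pairs of iterates are at distance
   [< 1/(j+1)]; [liminf Phi(delta) = 0] holds iff for every [j] there are
   arbitrarily large [n] such that fewer than [n/(j+1)] of them are at distance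
   [<= delta].  For fixed [j] and [n] each condition is open: the first counts
   indices in open sets from below, the second counts indices in closed sets
   from above.  So the set of scrambled pairs is a countable intersection of
   countable unions of open sets. *)

Lemma limn_esup_EFin_ubP (R : realType) (u : nat -> R) (a : R) :
  (forall n, u n <= a) ->
  limn_esup (fun n => (u n)%:E) = a%:E <->
  forall N e, 0 < e -> exists2 n, (N <= n)%N & a - e < u n.
Proof.
move=> ua.
have esupE : limn_esup (fun n => (u n)%:E) =
    ereal_inf (range (esups (fun n => (u n)%:E))).
  by rewrite limn_esup_lim; apply/cvg_lim => //; exact: cvg_esups_inf.
have esups_le N : (esups (fun n => (u n)%:E) N <= a%:E)%E.
  by apply: ge_ereal_sup => _ [n _ <-]; rewrite lee_fin.
split.
- move=> supa N e e0.
  have : ((a - e)%:E < esups (fun n => (u n)%:E) N)%E.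
    apply: (@lt_le_trans _ _ a%:E); first by rewrite lte_fin ltrBlDr ltrDl.
    by rewrite -supa esupE; apply: ereal_inf_lbound; exists N.
  by move=> /ereal_sup_gt [_ [n /= Nn <-]]; rewrite lte_fin; exists n.
- move=> freq; apply/le_anti/andP; split.
    rewrite esupE; apply: le_trans (esups_le 0%N).
    by apply: ereal_inf_lbound; exists 0%N.
  rewrite esupE; apply: le_ereal_inf_tmp => _ [N _ <-].
  apply/lee_subgt0Pr => e e0.
  have [n Nn ltn] := freq N e e0.
  apply: le_ereal_sup_tmp; exists (u n)%:E; first by exists n.
  by rewrite -EFinB lee_fin ltW.
Qed.

Lemma limn_einf_EFin_lbP (R : realType) (u : nat -> R) (a : R) :
  (forall n, a <= u n) ->
  limn_einf (fun n => (u n)%:E) = a%:E <->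
  forall N e, 0 < e -> exists2 n, (N <= n)%N & u n < a + e.
Proof.
move=> au.
have -> : limn_einf (fun n => (u n)%:E) = (- limn_esup (fun n => (- u n)%:E))%E.
  by rewrite /limn_einf; congr (- limn_esup _)%E; apply/funext => n; rewrite EFinN.
have /limn_esup_EFin_ubP supP : forall n, - u n <= - a by move=> n; rewrite lerN2.
split.
- move=> infa; have /supP freq : limn_esup (fun n => (- u n)%:E) = (- a)%:E.
    by rewrite EFinN -infa oppeK.
  by move=> N e e0; have [n Nn ltn] := freq N e e0; exists n => //; lra.
- move=> freq; rewrite supP.2 ?EFinN ?oppeK // => N e e0.
  by have [n Nn ltn] := freq N e e0; exists n => //; lra.
Qed.

Lemma exists_natSinv_lt {R : realType} (N : nat) {c : R} :
  0 < c -> exists2 j, (N <= j)%N & j.+1%:R^-1 < c.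
Proof.
move=> c0; have [k _ kP] := near_infty_natSinv_lt (PosNum c0).
by exists (maxn N k); [exact: leq_maxl | apply: kP; exact: leq_maxr].
Qed.

Section ContinuousDistance.
Context {R : realType} {X : metricType R} {T : topologicalType}.

Lemma near_mdist_lt {g : T -> X} (cg : continuous g) (p : T) {e : R} :
  0 < e -> \forall q \near p, mdist (g p) (g q) < e.
Proof. by move=> e0; exact: (metricType_numDomainType.cvgr_dist_lt (cg p) e0). Qed.

Context {g h : T -> X} (cg : continuous g) (ch : continuous h).

Lemma open_mdist_lt (t : R) : open [set p | mdist (g p) (h p) < t].
Proof.
rewrite openE => p /= ltp.
have e0 : 0 < (t - mdist (g p) (h p)) / 2 by rewrite divr_gt0 // subr_gt0.
move: (near_mdist_lt cg p e0) (near_mdist_lt ch p e0); rewrite /interior.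
apply: filterS2 => q gq hq /=.
have := metric_triangle (g q) (g p) (h q).
have := metric_triangle (g p) (h p) (h q).
by rewrite (metric_sym (g q) (g p)); lra.
Qed.

Lemma open_mdist_gt (t : R) : open [set p | t < mdist (g p) (h p)].
Proof.
rewrite openE => p /= ltp.
have e0 : 0 < (mdist (g p) (h p) - t) / 2 by rewrite divr_gt0 // subr_gt0.
move: (near_mdist_lt cg p e0) (near_mdist_lt ch p e0); rewrite /interior.
apply: filterS2 => q gq hq /=.
have := metric_triangle (g p) (g q) (h p).
have := metric_triangle (g q) (h q) (h p).
by rewrite (metric_sym (h q) (h p)); lra.
Qed.

End ContinuousDistance.

Section OpenCounts.
Context {T : topologicalType} {n : nat} (P : 'I_n -> T -> bool) (Q : nat -> Prop).

Lemma open_upclosed_count :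
  (forall i, open [set q | P i q]) -> (forall a b, Q a -> (a <= b)%N -> Q b) ->
  open [set q | Q (\sum_(i < n) P i q)%N].
Proof.
move=> oP Qup; rewrite openE => p /= Qp.
have : \forall q \near p, forall i, P i p -> P i q.
  apply: filter_forall => i; case: (boolP (P i p)) => Pip; last exact: nearW.
  by apply: filterS (open_nbhs_nbhs (conj (oP i) Pip)) => q /= ->.
apply: filterS => q Pq; apply: Qup Qp _; apply: leq_sum => i _.
by move: (Pq i); case: (P i p) => // /(_ isT) ->.
Qed.

Lemma open_downclosed_count :
  (forall i, open [set q | ~~ P i q]) -> (forall a b, Q b -> (a <= b)%N -> Q a) ->
  open [set q | Q (\sum_(i < n) P i q)%N].
Proof.
move=> oNP Qdown; rewrite openE => p /= Qp.
have : \forall q \near p, forall i, ~~ P i p -> ~~ P i q.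
  apply: filter_forall => i; case: (boolP (P i p)) => Pip; first exact: nearW.
  by apply: filterS (open_nbhs_nbhs (conj (oNP i) Pip)) => q /= ->.
apply: filterS => q NPq; apply: Qdown Qp _; apply: leq_sum => i _.
by move: (NPq i); case: (P i q); case: (P i p) => // /(_ isT).
Qed.

End OpenCounts.

Section DistributionalCounts.
Context {R : realType} {X : metricType R}.
Variables (f : X -> X) (m : nat -> nat).

Definition count_close (t : R) (n : nat) (x y : X) : nat :=
  (\sum_(i < n) close_at f m x y t i)%N.

Definition count_strictly_close (t : R) (n : nat) (x y : X) : nat :=
  (\sum_(i < n) (mdist (iter (m i) f x) (iter (m i) f y) < t)%R)%N.

Lemma count_close_le (t : R) n x y : (count_close t n x y <= n)%N.
Proof.
apply: (@leq_trans (\sum_(i < n) 1)%N); last by rewrite sum1_card card_ord.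
by apply: leq_sum => i _; exact: leq_b1.
Qed.

Lemma count_close_le_strictly (t s : R) n x y :
  t < s -> (count_close t n x y <= count_strictly_close s n x y)%N.
Proof.
move=> ts; apply: leq_sum => i _; rewrite /close_at.
by case: (ltP _ s) => [_|sd]; rewrite ?leq_b1 // leNgt (lt_le_trans ts sd).
Qed.

Lemma count_strictly_close_le (s t : R) n x y :
  s <= t -> (count_strictly_close s n x y <= count_close t n x y)%N.
Proof.
move=> st; apply: leq_sum => i _; rewrite /close_at.
by case: (ltP _ s) => // ds; rewrite (le_trans (ltW ds) st).
Qed.

Lemma Phi_n_ge0 x y t n : 0 <= Phi_n f m x y t n.
Proof. by rewrite divr_ge0. Qed.

Lemma Phi_n_le1 x y t n : Phi_n f m x y t n <= 1.
Proof.
case: n => [|n]; first by rewrite /Phi_n invr0 mulr0.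
by rewrite ler_pdivrMr ?ltr0n // mul1r ler_nat; exact: count_close_le.
Qed.

Lemma Phi_upper_eq1P x y :
  (forall t, 0 < t -> Phi_upper f m x y t = 1%:E) <->
  forall j, exists2 n, (j <= n)%N &
    (1 - j.+1%:R^-1) * n%:R < (count_strictly_close j.+1%:R^-1 n x y)%:R :> R.
Proof.
split.
- move=> sup1 j.
  have r0 : 0 < j.+1%:R^-1 :> R by rewrite invr_gt0 ltr0n.
  (* Distance [<= r/2] implies distance [< r]: this passes from [Phi] to the strict count. *)
  have r20 : 0 < j.+1%:R^-1 / 2 :> R by rewrite divr_gt0.
  have /limn_esup_EFin_ubP freq := sup1 _ r20.
  have [n jn] := freq (Phi_n_le1 x y _) j.+1 _ r0.
  rewrite /Phi_n ltr_pdivlMr ?ltr0n ?(leq_trans _ jn) // => ltn.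
  exists n; first exact: ltnW.
  apply: lt_le_trans ltn _; rewrite ler_nat; apply: count_close_le_strictly.
  by rewrite ltr_pdivrMr // ltr_pMr // ltr1n.
- move=> freq t t0; apply/limn_esup_EFin_ubP; first exact: Phi_n_le1.
  move=> N e e0.
  have min_gt0 : 0 < Num.min t e by rewrite lt_min t0 e0.
  have [j Nj] := exists_natSinv_lt N min_gt0.
  rewrite lt_min => /andP[jt je].
  have [n jn ltn] := freq j.
  have n0 : (0 < n)%N.
    by case: n {jn} ltn => //; rewrite mulr0 /count_strictly_close big_ord0 ltxx.
  exists n; first exact: leq_trans jn.
  rewrite /Phi_n ltr_pdivlMr ?ltr0n //.
  apply: (@le_lt_trans _ _ ((1 - j.+1%:R^-1) * n%:R)).
    by rewrite ler_wpM2r // lerB // ltW.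
  apply: lt_le_trans ltn _; rewrite ler_nat.
  exact/count_strictly_close_le/ltW.
Qed.

Lemma Phi_lower_eq0P x y (delta : R) :
  Phi_lower f m x y delta = 0%:E <->
  forall j, exists2 n, (j <= n)%N &
    (count_close delta n x y)%:R < j.+1%:R^-1 * n%:R :> R.
Proof.
split.
- move=> /limn_einf_EFin_lbP freq j.
  have r0 : 0 < j.+1%:R^-1 :> R by rewrite invr_gt0 ltr0n.
  have [n jn] := freq (Phi_n_ge0 x y _) j.+1 _ r0.
  rewrite /Phi_n add0r ltr_pdivrMr ?ltr0n ?(leq_trans _ jn) // => ltn.
  by exists n; first exact: ltnW.
- move=> freq; apply/limn_einf_EFin_lbP; first exact: Phi_n_ge0.
  move=> N e e0.
  have [j Nj je] := exists_natSinv_lt N e0.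
  have [n jn ltn] := freq j.
  have n0 : (0 < n)%N by case: n {jn} ltn => //; rewrite mulr0 ltNge ler0n.
  exists n; first exact: leq_trans jn.
  rewrite /Phi_n add0r ltr_pdivrMr ?ltr0n //.
  by apply: lt_le_trans ltn _; rewrite ler_wpM2r // ltW.
Qed.

Hypothesis cf : continuous f.

Lemma continuous_iter k : continuous (iter k f).
Proof.
elim: k => [|k IHk] x /=; first exact: cvg_id.
exact: continuous_comp (IHk x) (cf _).
Qed.

Let continuous_iter_fst k : continuous (iter k f \o fst : X * X -> X).
Proof. by move=> p; apply: continuous_comp; [exact: cvg_fst | exact: continuous_iter]. Qed.

Let continuous_iter_snd k : continuous (iter k f \o snd : X * X -> X).
Proof. by move=> p; apply: continuous_comp; [exact: cvg_snd | exact: continuous_iter]. Qed.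

Lemma open_count_strictly_close_gt (c s : R) n :
  open [set p : X * X | c < (count_strictly_close s n p.1 p.2)%:R].
Proof.
apply: (open_upclosed_count
  (fun i p => mdist (iter (m i) f p.1) (iter (m i) f p.2) < s)
  (fun a => c < a%:R)).
  by move=> i; exact: open_mdist_lt (continuous_iter_fst _) (continuous_iter_snd _) _.
by move=> a b ca ab; apply: lt_le_trans ca _; rewrite ler_nat.
Qed.

Lemma open_count_close_lt (c t : R) n :
  open [set p : X * X | (count_close t n p.1 p.2)%:R < c].
Proof.
apply: (open_downclosed_count (fun i p => close_at f m p.1 p.2 t i)
  (fun a => a%:R < c)).
  move=> i; rewrite (_ : [set q | _] =
    [set q | t < mdist (iter (m i) f q.1) (iter (m i) f q.2)]).
    exact: open_mdist_gt (continuous_iter_fst _) (continuous_iter_snd _) _.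
  by apply/seteqP; split => q /=; rewrite /close_at -ltNge.
by move=> a b bc ab; apply: le_lt_trans bc; rewrite ler_nat.
Qed.

End DistributionalCounts.

Theorem proposition2p3 (R : realType) (X : metricType R) (f : X -> X)
    (m : nat -> nat) (delta : R) :
  compact [set: X] ->
  continuous f ->
  (forall i, (0 < m i)%N) ->
  (forall i j, (i < j)%N -> (m i < m j)%N) ->
  0 < delta ->
  Gdelta (distr_scrambled_pairs f m delta).
Proof.
move=> _ cf _ _ _.
pose often_close j := \bigcup_(n in [set n | (j <= n)%N]) [set p : X * X |
  (1 - j.+1%:R^-1) * n%:R < (count_strictly_close f m j.+1%:R^-1 n p.1 p.2)%:R :> R].
pose rarely_close j := \bigcup_(n in [set n | (j <= n)%N]) [set p : X * X |
  (count_close f m delta n p.1 p.2)%:R < j.+1%:R^-1 * n%:R :> R].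
exists (fun j => often_close j `&` rarely_close j).
  move=> j; apply: openI; apply: bigcup_open => n _.
    exact: open_count_strictly_close_gt.
  exact: open_count_close_lt.
apply/seteqP; split => -[x y] /=.
- by move=> [/Phi_upper_eq1P close /Phi_lower_eq0P rarely] j _; split;
    [have [n] := close j | have [n] := rarely j]; exists n.
- move=> both; split; [apply/Phi_upper_eq1P | apply/Phi_lower_eq0P] => j;
    have [[n jn ?] [n' jn' ?]] := both j I.
  + by exists n.
  + by exists n'.
Qed.
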